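(* Let $a,b,c,d\ge 0$ be integers with $a+b=c+d=n\ge 1$, and let $\underline x=(a,b)$ and $\underline y=(c,d)$. Then the meander permutation $\sigma_{\underline x,\underline y}$ sends each $i\in\{1,\ldots,n\}$ to the unique element of $\{1,\ldots,n\}$ congruent to $i+a-c$ modulo $n$.
   Context: For compositions $\underline x=(a_1,\ldots,a_m)$, $\underline y=(b_1,\ldots,b_t)$ of $n$ (sequences of nonnegative integers summing to $n$), define bijections $t,b$ of $\{1,\ldots,n\}$ as follows. For each part $a_k$ with $s=a_1+\cdots+a_{k-1}$, set $t(s+j)=s+a_k+1-j$ for $1\le j\le a_k$. Similarly, for each part $b_k$ of $\underline y$ with $s=b_1+\cdots+b_{k-1}$, set $b(s+j)=s+b_k+1-j$ for $1\le j\le b_k$. (These are the top and bottom bijections of the modified meander graph: each vertex is sent to the other endpoint of its top, resp. bottom, arc and fixed if it has none.) The meander permutation is $\sigma_{\underline x,\underline y}=t\circ b$. *)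

From mathcomp Require Import all_boot all_order all_algebra.
Set Implicit Arguments. Unset Strict Implicit. Unset Printing Implicit Defensive.

(* Block-reversal bijection of {1,...,n} attached to a composition
   s = (a_1,...,a_m) (a sequence of nonnegative integers).  Points not covered by any
   part (only possible outside {1,..,sum s}) are fixed. *)
Fixpoint block_rev_aux (off : nat) (s : seq nat) (i : nat) : nat :=
  match s with
  | [::] => i
  | a :: s' =>
      if (off < i) && (i <= off + a) then off + a + 1 - (i - off)
      else block_rev_aux (off + a) s' i
  end.

Definition block_rev (s : seq nat) (i : nat) : nat := block_rev_aux 0 s i.

(* top bijection t from x, bottom bijection b from y, sigma = t o b *)
Definition meander_perm (x y : seq nat) (i : nat) : nat :=
  block_rev x (block_rev y i).

From mathcomp Require Import all_boot all_order all_algebra.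
From mathcomp Require Import zify.

(* With two blocks, [block_rev [:: p; q]] is the reflection i |-> p + 1 - i of
   Z/(p+q) restricted to {1, ..., p+q}; the meander permutation is a product of
   two such reflections, hence the translation by a - c. *)

Section TwoBlockReversal.

Variables p q : nat.

Lemma block_rev2_first (i : nat) :
  1 <= i <= p -> block_rev [:: p; q] i = p + 1 - i.
Proof. by move=> /andP[i_gt0 i_le]; rewrite /block_rev /= i_gt0 i_le !add0n subn0. Qed.

Lemma block_rev2_second (i : nat) :
  p < i <= p + q -> block_rev [:: p; q] i = p + q + 1 - (i - p).
Proof.
move=> /andP[p_lt i_le]; rewrite /block_rev /= add0n.
have i_gt0 : 0 < i by apply: leq_ltn_trans p_lt.
by rewrite i_gt0 leqNgt p_lt /= i_le.
Qed.

Lemma block_rev2_in_range (i : nat) :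
  1 <= i <= p + q -> 1 <= block_rev [:: p; q] i <= p + q.
Proof.
move=> /andP[i_gt0 i_le]; have [i_leq | p_lt] := leqP i p.
- by rewrite block_rev2_first ?i_gt0 //; lia.
- by rewrite block_rev2_second ?p_lt //; lia.
Qed.

Lemma block_rev2_mod (i : nat) :
  1 <= i <= p + q ->
  ((block_rev [:: p; q] i)%:Z = p%:Z + 1 - i%:Z %[mod (p + q)%:Z])%Z.
Proof.
move=> /andP[i_gt0 i_le]; have [i_leq | p_lt] := leqP i p.
- by rewrite block_rev2_first ?i_gt0 //; congr (_ %% _)%Z; lia.
- rewrite block_rev2_second ?p_lt //.
  have -> : ((p + q + 1 - (i - p))%N%:Z = (p%:Z + 1 - i%:Z + (p + q)%:Z)%R)%Z by lia.
  exact: modzDr.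
Qed.

End TwoBlockReversal.

Theorem lemma4p8 (a b c d n : nat) :
  a + b = n -> c + d = n -> 1 <= n ->
  forall i : nat, 1 <= i <= n ->
    (1 <= meander_perm [:: a; b] [:: c; d] i <= n) /\
    (((meander_perm [:: a; b] [:: c; d] i)%:Z
       = i%:Z + a%:Z - c%:Z %[mod n%:Z])%Z).
Proof.
move=> <- cd_eq _ i i_range; rewrite /meander_perm.
have i_range' : 1 <= i <= c + d by rewrite cd_eq.
set j := block_rev [:: c; d] i.
have j_range : 1 <= j <= a + b by rewrite -cd_eq; exact: block_rev2_in_range.
have j_mod : (j%:Z = c%:Z + 1 - i%:Z %[mod (a + b)%N])%Z.
  by rewrite -cd_eq; exact: block_rev2_mod.
split; first exact: block_rev2_in_range.
rewrite block_rev2_mod // -modzDmr -modzNm j_mod modzNm modzDmr.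
by congr (_ %% _)%Z; lia.
Qed.
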